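(* Let $n\ge 5$. If $x\in\mathrm{Sort}_n(123,321)$, then $\mathrm{ind}_x(n)<\min(\mathrm{ind}_x(1),\mathrm{ind}_x(2))$, i.e. $n$ appears to the left of both $1$ and $2$ in $x$.
   Context: $\mathrm{ind}_x(a)$ is the position of the value $a$ in $x$. A permutation contains a pattern $p$ if it has a subsequence order-isomorphic to $p$; otherwise it avoids $p$. For a set $T$ of patterns, the map $s_T$ is defined as follows: the entries of the input permutation are read from left to right, with an initially empty stack. At each step, if the input is nonempty and pushing the next input entry onto the stack produces a stack whose contents, read from top to bottom, avoid every pattern in $T$, that entry is pushed; otherwise the top entry of the stack is popped and appended to the output. When the input is exhausted, the remaining stack entries are popped one at a time to the output. Write $s_{\sigma,\tau}=s_{\{\sigma,\tau\}}$ and $s=s_{\{21\}}$ (West's stack-sorting map). $\mathrm{Sort}_n(\sigma,\tau)$ is the set of $x\in S_n$ with $s(s_{\sigma,\tau}(x))=12\cdots n$. *)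

(* Permutations of [n] are represented as sequences of
   naturals that are permutations of [:: 1; ...; n]. *)
From mathcomp Require Import all_boot.
Set Implicit Arguments. Unset Strict Implicit. Unset Printing Implicit Defensive.

Definition order_iso (s p : seq nat) : bool :=
  (size s == size p) &&
  all (fun i => all (fun j =>
     (nth 0 s i < nth 0 s j) == (nth 0 p i < nth 0 p j))
     (iota 0 (size p))) (iota 0 (size p)).

Fixpoint subseqs (w : seq nat) : seq (seq nat) :=
  match w with
  | [::] => [:: [::]]
  | x :: w' => [seq x :: s | s <- subseqs w'] ++ subseqs w'
  end.

Definition contains (w p : seq nat) : bool := has (order_iso ^~ p) (subseqs w).

Definition avoids_all (T : seq (seq nat)) (w : seq nat) : bool :=
  all (fun p => ~~ contains w p) T.

(* The stack is a list read from top to bottom. *)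
Fixpoint push_step (T : seq (seq nat)) (a : nat) (stk out : seq nat)
  : seq nat * seq nat :=
  if avoids_all T (a :: stk) then (a :: stk, out) else
  match stk with
  | [::] => ([:: a], out) (* unreachable when all patterns have length >= 2 *)
  | b :: stk' => push_step T a stk' (rcons out b)
  end.

Fixpoint stack_run (T : seq (seq nat)) (inp stk out : seq nat) : seq nat :=
  match inp with
  | [::] => out ++ stk
  | a :: inp' =>
      let '(stk', out') := push_step T a stk out in stack_run T inp' stk' out'
  end.

Definition sT (T : seq (seq nat)) (x : seq nat) : seq nat := stack_run T x [::] [::].

Definition s_pair (sigma tau : seq nat) := sT [:: sigma; tau].

Definition west_s := sT [:: [:: 2; 1]].

Definition is_perm (n : nat) (x : seq nat) : bool := perm_eq x (iota 1 n).

Definition in_Sort (n : nat) (sigma tau : seq nat) (x : seq nat) : Prop :=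
  is_perm n x /\ west_s (s_pair sigma tau x) = iota 1 n.

(* ind_x(a): position of a in x (0-based; only comparisons are used) *)
Definition ind (x : seq nat) (a : nat) : nat := index a x.

Example west_ex : west_s [:: 3; 1; 2] = [:: 1; 2; 3]. Proof. vm_compute. reflexivity. Qed.
Example west_ex2 : west_s [:: 2; 3; 1] = [:: 2; 1; 3]. Proof. vm_compute. reflexivity. Qed.
Example sp_ex : s_pair [:: 1; 2; 3] [:: 3; 2; 1] [:: 1; 2; 3; 4] = [:: 2; 3; 4; 1].
Proof. vm_compute. reflexivity. Qed.

From mathcomp Require Import all_boot zify.
Set Implicit Arguments. Unset Strict Implicit. Unset Printing Implicit Defensive.

(* West's map sorts [y] only if [y] avoids 231: when the [c] of an occurrence
   [b c a] is pushed, [b] is popped, so [b] is output before [a].  Hence it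
   suffices to find a 231 in [y = s_{123,321}(x)] whenever 1 or 2 precedes [n]
   in [x].  Let [m <= 2] be the least entry before [n].  The stack avoids 123 and
   321, so right after [m] is pushed the entries beneath [m] decrease downwards
   and there are at most two of them.
   - If there are two, [d1 > d2], then [d2] stays at the bottom; when [n] is
     pushed, the entries beneath [n] increase downwards to [d2], so [d1] has been
     output, and [d1], [n] and the entry just below [n] form a 231.
   - Otherwise [m], with the entry [d] beneath it if any, is never disturbed
     before [n], which lands directly on [m].  Unless [m = 2], [d] exists and 1
     comes later, [n m d] then stays at the bottom, so [y] ends with [n m (d)]
     preceded by an entry larger than 2.  In the remaining case 1 pops [n] and 2,
     giving [y = W n 2 V 1 d], and any entry of [W] or [V] completes a 231
     because [n >= 5]. *)

(** * Patterns *)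

Lemma mem_subseqs (w s : seq nat) : (s \in subseqs w) = subseq s w.
Proof.
elim: w s => [|x w IH] [|y s] //=; rewrite mem_cat IH ?sub0seq ?orbT //.
case: eqP => [->|ne].
  have cons_inj : injective (cons x) by move=> ? ? [].
  by rewrite (mem_map cons_inj) IH orb_idr // => /cons_subseq.
by case: mapP => // -[? _ [/ne]].
Qed.

Lemma containsP w p : reflect (exists2 s, subseq s w & order_iso s p) (contains w p).
Proof. by apply: (iffP hasP) => -[s]; rewrite ?mem_subseqs; exists s; rewrite ?mem_subseqs. Qed.

Lemma contains_subseq w w' p : subseq w w' -> contains w p -> contains w' p.
Proof.
by move=> ww' /containsP [s sw iso]; apply/containsP; exists s => //; apply: subseq_trans ww'.
Qed.

Lemma avoids_all_subseq T w w' : subseq w w' -> avoids_all T w' -> avoids_all T w.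
Proof. by move=> ww' /allP avw'; apply/allP => p /avw'; apply: contra; apply: contains_subseq. Qed.

Lemma order_iso_123 a b c : order_iso [:: a; b; c] [:: 1; 2; 3] = (a < b < c).
Proof. by rewrite /order_iso /= !ltnn /=; apply/idP/idP; lia. Qed.

Lemma order_iso_321 a b c : order_iso [:: a; b; c] [:: 3; 2; 1] = (c < b < a).
Proof. by rewrite /order_iso /= !ltnn /=; apply/idP/idP; lia. Qed.

Lemma order_iso_231 a b c : order_iso [:: b; c; a] [:: 2; 3; 1] = (a < b < c).
Proof. by rewrite /order_iso /= !ltnn /=; apply/idP/idP; lia. Qed.

Lemma contains_231P w :
  reflect (exists a b c, [/\ a < b, b < c & subseq [:: b; c; a] w]) (contains w [:: 2; 3; 1]).
Proof.
apply: (iffP (containsP _ _)) => [[[|b [|c [|a []]]] // sw]|[a [b [c [ab bc sw]]]]].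
  by rewrite order_iso_231 => /andP [ab bc]; exists a, b, c.
by exists [:: b; c; a]; rewrite // order_iso_231 ab.
Qed.

(** * Pattern-avoiding stacks *)

Section StackMachine.

Variable T : seq (seq nat).

Fixpoint stack_cfg (inp stk out : seq nat) : seq nat * seq nat :=
  if inp is a :: inp' then
    let: (stk', out') := push_step T a stk out in stack_cfg inp' stk' out'
  else (stk, out).

Lemma stack_run_cfg inp stk out :
  stack_run T inp stk out = (stack_cfg inp stk out).2 ++ (stack_cfg inp stk out).1.
Proof. by elim: inp stk out => [|a inp IH] stk out //=; case: push_step. Qed.

Lemma stack_run_cat u v stk out :
  stack_run T (u ++ v) stk out =
  stack_run T v (stack_cfg u stk out).1 (stack_cfg u stk out).2.
Proof. by elim: u stk out => [|a u IH] stk out //=; case: push_step. Qed.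

Lemma push_stepP a stk out : exists P R, [/\ stk = P ++ R,
  push_step T a stk out = (a :: R, out ++ P) & avoids_all T (a :: R) \/ R = [::]].
Proof.
elim: stk out => [|b stk IH] out /=.
  by exists [::], [::]; rewrite !cats0; case: ifP; split => //; right.
case: ifP => [avT|_]; first by exists [::], (b :: stk); rewrite !cats0; split => //; left.
have [P [R [-> -> avR]]] := IH (rcons out b).
by exists (b :: P), R; rewrite -cats1 -catA.
Qed.

Lemma push_step_bottom a P0 U out : avoids_all T (a :: U) ->
  exists P1 P2, [/\ P0 = P1 ++ P2,
    push_step T a (P0 ++ U) out = (a :: P2 ++ U, out ++ P1) &
    avoids_all T (a :: P2 ++ U)].
Proof.
move=> avU; elim: P0 out => [|b P0 IH] out /=.
  by exists [::], [::]; rewrite !cats0; case: U avU => [|c U] /= ->.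
case: ifP => [avT|_]; first by exists [::], (b :: P0); rewrite cats0.
have [P1 [P2 [-> -> avP2]]] := IH (rcons out b).
by exists (b :: P1), P2; rewrite -cats1 -catA.
Qed.

Lemma push_step_pop_above a P U out : avoids_all T (a :: U) ->
  (P != [::] -> ~~ avoids_all T (a :: last a P :: U)) ->
  push_step T a (P ++ U) out = (a :: U, out ++ P).
Proof.
move=> avU avP; have [P1 [P2 [EP -> avP2]]] := push_step_bottom P out avU.
case/lastP: P2 EP avP2 => [|P2 t] EP avP2; first by rewrite EP !cats0.
have /avP : P != [::] by rewrite -size_eq0 EP size_cat size_rcons addnS.
rewrite EP last_cat last_rcons => /negP []; apply: avoids_all_subseq avP2.
by rewrite -cats1 -catA /= eqxx; apply: suffix_subseq.
Qed.

Lemma stack_cfg_perm inp stk out :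
  perm_eq ((stack_cfg inp stk out).2 ++ (stack_cfg inp stk out).1) (out ++ stk ++ inp).
Proof.
elim: inp stk out => [|a inp IH] stk out /=; first by rewrite cats0.
have [P [R [-> -> _]]] := push_stepP a stk out.
by apply: perm_trans (IH _ _) _; rewrite -!catA !perm_cat2l /= -cat1s perm_catCA.
Qed.

Lemma stack_run_perm inp stk out : perm_eq (stack_run T inp stk out) (out ++ stk ++ inp).
Proof. by rewrite stack_run_cfg stack_cfg_perm. Qed.

Lemma stack_run_prefix inp stk out : exists Z, stack_run T inp stk out = out ++ Z.
Proof.
elim: inp stk out => [|a inp IH] stk out /=; first by exists stk.
have [P [R [_ -> _]]] := push_stepP a stk out.
by have [Z ->] := IH (a :: R) (out ++ P); exists (P ++ Z); rewrite catA.
Qed.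

Lemma stack_run_subseq inp stk out : subseq (out ++ stk) (stack_run T inp stk out).
Proof.
elim: inp stk out => [|a inp IH] stk out /=; first exact: subseq_refl.
have [P [R [-> -> _]]] := push_stepP a stk out.
apply: subseq_trans (IH _ _); rewrite -!catA cat_subseq // cat_subseq //.
exact: subseq_cons.
Qed.

Lemma stack_cfg_bottom inp P0 U out : {in inp, forall c, avoids_all T (c :: U)} ->
  exists P Z, stack_cfg inp (P0 ++ U) out = (P ++ U, out ++ Z) /\
              perm_eq (Z ++ P) (P0 ++ inp).
Proof.
elim: inp P0 out => [|a inp IH] P0 out avU /=.
  by exists P0, [::]; rewrite !cats0.
have [P1 [P2 [-> -> _]]] := push_step_bottom P0 out (avU a (mem_head _ _)).
have avU' : {in inp, forall c, avoids_all T (c :: U)}.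
  by move=> c c_inp; apply: avU; rewrite inE c_inp orbT.
have [P [Z [-> permZ]]] := IH (a :: P2) (out ++ P1) avU'.
exists P, (P1 ++ Z); rewrite catA; split => //.
by rewrite -catA -catA perm_cat2l (perm_trans permZ) //= -cat1s perm_catCA.
Qed.

Lemma stack_run_bottom inp P0 U out : {in inp, forall c, avoids_all T (c :: U)} ->
  exists Y, stack_run T inp (P0 ++ U) out = out ++ Y ++ U.
Proof.
move=> avU; have [P [Z [cfgE _]]] := stack_cfg_bottom P0 out avU.
by exists (Z ++ P); rewrite stack_run_cfg cfgE -!catA.
Qed.

End StackMachine.

(** * West's stack-sorting map *)

Lemma sorted_ltn_subseq_pair (s : seq nat) a b : sorted ltn s -> subseq [:: a; b] s -> a < b.
Proof. by move=> sorted_s /(subseq_sorted ltn_trans) /(_ sorted_s) /andP []. Qed.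

Lemma west_s_sorted_avoids_231 y : sorted ltn (west_s y) -> ~~ contains y [:: 2; 3; 1].
Proof.
move=> sorted_s; apply/contains_231P => -[a [b [c [ab bc sub]]]].
have perm_s : perm_eq (west_s y) y by rewrite /west_s /sT stack_run_perm.
have uniq_y : uniq y by rewrite -(perm_uniq perm_s) (sorted_uniq ltn_trans ltnn).
have c_y : c \in y by apply: (mem_subseq sub); rewrite !inE eqxx orbT.
move: sub uniq_y perm_s sorted_s; case/splitPr: c_y => u v sub uniq_y perm_s sorted_s.
move: sub; rewrite -[[:: b; c; a]]/([:: b] ++ c :: [:: a]) uniq_subseq_pivot //.
rewrite !sub1seq => /andP [b_u a_v].
set W := [:: [:: 2; 1]] in sorted_s perm_s.
have perm_u := stack_cfg_perm W u [::] [::].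
move: sorted_s perm_s; rewrite /west_s /sT stack_run_cat /=.
set o := (stack_cfg W u [::] [::]).2 in perm_u *.
have [P [R [stkE -> avR]]] := push_stepP W c (stack_cfg W u [::] [::]).1 o.
rewrite stkE catA in perm_u.
have b_oP : b \in o ++ P.
  have : b \in (o ++ P) ++ R by rewrite (perm_mem perm_u).
  rewrite mem_cat => /orP [//|b_R]; case: avR => [|R0]; last by rewrite R0 in b_R.
  rewrite /avoids_all /= andbT => /negP; case; apply/containsP.
  exists [:: c; b]; first by rewrite /= eqxx sub1seq.
  by rewrite /order_iso /= !ltnn bc (leq_gtF (ltnW bc)).
have a_u : a \notin u.
  by move: uniq_y; rewrite cat_uniq => /and3P [_ /hasPn/(_ a) + _]; apply; rewrite inE a_v orbT.
have a_oP : a \notin o ++ P.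
  by apply: contra a_u => a_oP; rewrite -(perm_mem perm_u) mem_cat a_oP.
have [Z ->] := stack_run_prefix W v (c :: R) (o ++ P).
move=> sorted_s perm_s; have a_Z : a \in Z.
  have : a \in (o ++ P) ++ Z by rewrite (perm_mem perm_s) mem_cat inE a_v !orbT.
  by rewrite mem_cat (negPf a_oP).
have := sorted_ltn_subseq_pair sorted_s (cat_subseq (_ : subseq [:: b] _) (_ : subseq [:: a] _)).
by rewrite !sub1seq b_oP a_Z ltnNge (ltnW ab) => /(_ isT isT).
Qed.

(** * The stack of s_{123,321} *)

Definition mono3 : seq (seq nat) := [:: [:: 1; 2; 3]; [:: 3; 2; 1]].

Local Notation mono3_free := (avoids_all mono3).

Lemma mono3_free_pair a b : mono3_free [:: a; b].
Proof. by []. Qed.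

Lemma mono3_free3 a b c : mono3_free [:: a; b; c] = ~~ (a < b < c) && ~~ (c < b < a).
Proof. by rewrite /avoids_all /contains /= order_iso_123 order_iso_321 /= !orbF andbT. Qed.

Lemma mono3_free4 a b c d : mono3_free [:: a; b; c; d] =
  [&& mono3_free [:: a; b; c], mono3_free [:: a; b; d],
      mono3_free [:: a; c; d] & mono3_free [:: b; c; d]].
Proof.
rewrite !mono3_free3 /avoids_all /contains /= !order_iso_123 !order_iso_321 /=.
by rewrite !orbF !andbT !negb_or; do 8 case: (_ < _ < _); rewrite ?andbF.
Qed.

Lemma pairwise_leq_below_max n S :
  mono3_free (n :: S) -> {in S, forall c, c < n} -> pairwise leq S.
Proof.
elim: S => // s S IH free_nsS ltn_n; rewrite pairwise_cons.
have free_nS : mono3_free (n :: S).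
  by apply: avoids_all_subseq free_nsS; rewrite /= eqxx; apply: subseq_cons.
rewrite IH //; last by move=> c cS; apply: ltn_n; rewrite inE cS orbT.
rewrite andbT; apply/allP => t tS.
have : mono3_free [:: n; s; t].
  by apply: avoids_all_subseq free_nsS; rewrite /= !eqxx sub1seq.
have := ltn_n s (mem_head _ _); rewrite mono3_free3; lia.
Qed.

Lemma below_min_shape m D : mono3_free (m :: D) -> {in D, forall d, m < d} ->
  uniq D -> size D <= 1 \/ exists d1 d2, D = [:: d1; d2] /\ d2 < d1.
Proof.
case: D => [|d1 [|d2 [|d3 D]]] free_mD gt_m uniq_D; [by left | by left | right | exfalso].
  exists d1, d2; split => //; move: free_mD uniq_D; rewrite mono3_free3 /= inE.
  by have := gt_m d1 (mem_head _ _); lia.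
have free_mask b : mono3_free (mask b [:: m, d1, d2, d3 & D]).
  exact: avoids_all_subseq (mask_subseq _ _) free_mD.
have := free_mask [:: true; true; true].
have := free_mask [:: true; false; true; true].
have := free_mask [:: false; true; true; true].
move: uniq_D; rewrite !mono3_free3 /= !inE.
have := gt_m d1; have := gt_m d2; have := gt_m d3; rewrite !inE !eqxx !orbT; lia.
Qed.

Lemma sT_mono3_cat_cons u a v : exists D out, [/\
  sT mono3 (u ++ a :: v) = stack_run mono3 v (a :: D) out,
  mono3_free (a :: D) & perm_eq (out ++ D) u].
Proof.
rewrite /sT stack_run_cat /=; have perm_u := stack_cfg_perm mono3 u [::] [::].
have [P [D [stkE -> free_D]]] :=
  push_stepP mono3 a (stack_cfg mono3 u [::] [::]).1 (stack_cfg mono3 u [::] [::]).2.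
exists D, ((stack_cfg mono3 u [::] [::]).2 ++ P); split => //.
  by case: free_D => [//|->].
by rewrite -catA -stkE.
Qed.

Lemma stack_run_contains_231_of_bottom b d n P out u v :
  b < d < n -> d \in out ++ P ++ [:: b] -> {in P ++ b :: u, forall c, c < n} ->
  contains (stack_run mono3 (u ++ n :: v) (P ++ [:: b]) out) [:: 2; 3; 1].
Proof.
move=> /andP [bd dn] d_in ltn_n.
have perm_cfg := stack_cfg_perm mono3 u (P ++ [:: b]) out.
have [P' [Z [cfgE permZ]]] :=
  @stack_cfg_bottom mono3 u P [:: b] out (fun c _ => mono3_free_pair c b).
rewrite cfgE /= in perm_cfg; rewrite stack_run_cat cfgE /=.
have [P1 [P2 [EP' -> free_n]]] := push_step_bottom P' (out ++ Z) (mono3_free_pair n b).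
have ltn_S : {in P2 ++ [:: b], forall c, c < n}.
  move=> c; rewrite mem_cat inE => /orP [cP2|/eqP ->]; apply: ltn_n; last first.
    by rewrite mem_cat mem_head orbT.
  have : c \in P ++ u by rewrite -(perm_mem permZ) EP' !mem_cat cP2 !orbT.
  by rewrite !mem_cat inE => /orP [->|->]; rewrite ?orbT.
have le_b : {in P2 ++ [:: b], forall s, s <= b}.
  have := pairwise_leq_below_max free_n ltn_S; rewrite pairwise_cat allrel1r.
  by case/and3P => /allP le_b _ _ s; rewrite mem_cat inE => /orP [/le_b|/eqP ->].
set s := head b P2.
have s_S : s \in P2 ++ [:: b] by rewrite /s; case: (P2) => [|? ?] /=; rewrite mem_head.
have d_out : d \in (out ++ Z) ++ P1.
  have : d \in (out ++ Z) ++ P' ++ [:: b] by rewrite (perm_mem perm_cfg) catA mem_cat d_in.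
  rewrite EP' -(catA P1) catA mem_cat => /orP [//|d_S]; have := le_b d d_S; lia.
apply: contains_subseq (stack_run_subseq _ _ _ _) _; apply/contains_231P.
exists s, d, n; split => //; first by have := le_b s s_S; lia.
by rewrite -[[:: d; n; s]]/([:: d] ++ [:: n; s]) cat_subseq ?sub1seq //= eqxx sub1seq.
Qed.

Lemma stack_run_max_onto_min m n D A2 B out : m < n -> size D <= 1 ->
  {in D ++ A2, forall c, m < c < n} ->
  exists out', stack_run mono3 (A2 ++ n :: B) (m :: D) out =
               stack_run mono3 B [:: n, m & D] out'.
Proof.
move=> mn sD range.
have free_c c : m < c -> mono3_free [:: c, m & D].
  case: D sD range => [|d0 []] // _ range mc; rewrite mono3_free3.
  by have := range d0 (mem_head _ _); lia.
have range_A2 c : c \in A2 -> m < c < n by move=> cA2; apply: range; rewrite mem_cat cA2 orbT.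
have free_A2 : {in A2, forall c, mono3_free [:: c, m & D]}.
  by move=> c /range_A2 /andP [/free_c].
have [P [Z [cfgE permZ]]] := @stack_cfg_bottom mono3 A2 [::] (m :: D) out free_A2.
rewrite stack_run_cat cfgE /= push_step_pop_above ?free_c //; first by eexists.
move=> P0; have /range_A2 /andP [mt tn] : last n P \in A2.
  by rewrite -(perm_mem permZ) mem_cat; case: (P) P0 => //= t P' _; rewrite mem_last orbT.
apply/negP => /(avoids_all_subseq (prefix_subseq [:: n; last n P; m] D)).
by rewrite mono3_free3; lia.
Qed.

Lemma stack_run_one_pops_n_2 n d B1 B2 out : 2 < d < n -> {in B1, forall c, 2 < c < n} ->
  {in B2, forall c, 1 < c} ->
  exists W V, stack_run mono3 (B1 ++ 1 :: B2) [:: n; 2; d] out = W ++ [:: n, 2 & V ++ [:: 1; d]].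
Proof.
move=> dn range1 range2.
have free1 c : c \in B1 -> mono3_free [:: c; n; 2; d].
  by move=> /range1; rewrite mono3_free4 !mono3_free3; lia.
have [P [Z [cfgE _]]] := @stack_cfg_bottom mono3 B1 [::] [:: n; 2; d] out free1.
rewrite stack_run_cat cfgE /=.
have -> : P ++ [:: n; 2; d] = (P ++ [:: n; 2]) ++ [:: d] by rewrite -catA.
rewrite push_step_pop_above //; last first.
  by move=> _; rewrite last_cat [last _ _]/= mono3_free3; lia.
have free2 c : c \in B2 -> mono3_free [:: c; 1; d] by move=> /range2; rewrite mono3_free3; lia.
have [Y ->] := @stack_run_bottom mono3 B2 [::] [:: 1; d] ((out ++ Z) ++ P ++ [:: n; 2]) free2.
by exists ((out ++ Z) ++ P), Y; rewrite -!catA.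
Qed.

(** * Finding 231 in the output *)

Lemma perm_iota_props n y : perm_eq y (iota 1 n) ->
  [/\ uniq y, size y = n & {in y, forall c, 0 < c <= n}].
Proof.
move=> py; rewrite (perm_uniq py) (perm_size py) iota_uniq size_iota; split=> // c.
by rewrite (perm_mem py) mem_iota; lia.
Qed.

Lemma perm_iota_max n u : perm_eq (n :: u) (iota 1 n) ->
  uniq u /\ {in u, forall c, 0 < c < n}.
Proof.
move=> /perm_iota_props [/= /andP [n_u uniq_u] _ range]; split => // c cu.
have : c != n by apply: contraNneq n_u => <-.
by have := range c; rewrite inE cu orbT => /(_ isT); lia.
Qed.

Lemma contains_231_of_max_min_suffix n Y m D : 5 <= n -> m <= 2 -> size D <= 1 ->
  perm_eq (Y ++ [:: n, m & D]) (iota 1 n) -> contains (Y ++ [:: n, m & D]) [:: 2; 3; 1].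
Proof.
move=> n5 m2 sD /perm_iota_props [uniq_y size_y range].
case: Y uniq_y size_y range => [|y1 [|y2 Y]] uniq_y size_y range;
  rewrite ?size_cat /= in size_y; try lia.
set y := _ ++ _ in uniq_y range *.
have sub : subseq [:: y1; y2; n; m] y.
  by rewrite /= !eqxx; apply: (cat_subseq (sub0seq Y)); apply: prefix_subseq.
have /(subseq_uniq sub) := uniq_y; rewrite /= !inE.
have := range m; have := range y1; have := range y2.
rewrite !(mem_subseq sub) ?inE ?eqxx ?orbT // => /(_ isT) y2r /(_ isT) y1r /(_ isT) mr distinct.
apply/contains_231P; case: (ltnP 2 y1) => y1_big.
  exists m, y1, n; split; try lia.
  exact: subseq_trans (mask_subseq [:: true; false; true; true] _) sub.
exists m, y2, n; split; try lia.
exact: subseq_trans (mask_subseq [:: false; true; true; true] _) sub.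
Qed.

Lemma contains_231_of_two_one_suffix n W V d : 5 <= n ->
  perm_eq (W ++ [:: n, 2 & V ++ [:: 1; d]]) (iota 1 n) ->
  contains (W ++ [:: n, 2 & V ++ [:: 1; d]]) [:: 2; 3; 1].
Proof.
move=> n5 /perm_iota_props [uniq_y size_y range].
set y := _ ++ _ in uniq_y size_y range *.
have [e] : exists e, e \in W ++ V.
  have : 0 < size W + size V by move: size_y; rewrite /y size_cat /= size_cat /=; lia.
  by rewrite -size_cat; case: (W ++ V) => // e ? _; exists e; apply: mem_head.
rewrite mem_cat => /orP [eW|eV]; apply/contains_231P.
  have sub : subseq [:: e; n; 2; 1] y.
    rewrite /y -cat1s; apply: cat_subseq; first by rewrite sub1seq.
    by rewrite /= !eqxx sub1seq mem_cat mem_head orbT.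
  have /(subseq_uniq sub) := uniq_y; have := range e (mem_subseq sub (mem_head _ _)).
  rewrite /= !inE => e_range distinct; exists 2, e, n; split; try lia.
  exact: subseq_trans (mask_subseq [:: true; true; true] _) sub.
have sub : subseq [:: n; 2; e; 1] y.
  apply: (cat_subseq (sub0seq W)); rewrite /= !eqxx -cat1s.
  by apply: cat_subseq; rewrite sub1seq ?mem_head.
have /(subseq_uniq sub) := uniq_y; have := range e (mem_subseq sub _).
rewrite !inE eqxx !orbT => /(_ isT) e_range; rewrite /= !inE => distinct.
exists 1, 2, e; split; try lia.
exact: subseq_trans (mask_subseq [:: false; true; true; true] _) sub.
Qed.

Lemma stack_run_contains_231_of_min_layer n m D A2 B out :
  5 <= n -> size D <= 1 -> m = 1 \/ m = 2 /\ 1 \in B ->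
  {in D ++ A2, forall c, m < c < n} -> {in B, forall c, 0 < c < n} -> uniq (m :: B) ->
  perm_eq (stack_run mono3 (A2 ++ n :: B) (m :: D) out) (iota 1 n) ->
  contains (stack_run mono3 (A2 ++ n :: B) (m :: D) out) [:: 2; 3; 1].
Proof.
move=> n5 sD m12 range_DA2 range_B; rewrite cons_uniq => /andP [m_B uniq_B].
have m2 : m <= 2 by case: m12 => [|[]] ->.
have mn : m < n by lia.
have [out' ->] := stack_run_max_onto_min B out mn sD range_DA2.
have ne_m c : c \in B -> c != m by move=> cB; apply: contraNneq m_B => <-.
have keep_bottom : {in B, forall c, mono3_free [:: c, n, m & D]} ->
    perm_eq (stack_run mono3 B [:: n, m & D] out') (iota 1 n) ->
    contains (stack_run mono3 B [:: n, m & D] out') [:: 2; 3; 1].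
  move=> free_B; have [Y ->] := @stack_run_bottom mono3 B [::] _ out' free_B.
  by rewrite catA; apply: contains_231_of_max_min_suffix.
case: D sD range_DA2 keep_bottom => [|d0 []] // _ range_DA2 keep_bottom.
  by apply: keep_bottom => c /range_B; rewrite mono3_free3; lia.
have /andP [md0 d0n] := range_DA2 d0 (mem_head _ _).
case: m12 => [m1|[m2' one_B]]; subst m.
  apply: keep_bottom => c cB; have := ne_m c cB; have := range_B c cB.
  by rewrite mono3_free4 !mono3_free3; lia.
move: uniq_B range_B ne_m; case/splitPr: one_B => B1 B2 uniq_B range_B ne_m.
have one_notin : 1 \notin B1 ++ B2.
  rewrite mem_cat negb_or; move: uniq_B.
  by rewrite cat_uniq /= => /and3P [_ /norP [-> _] /andP [-> _]].
have range_B' c : c \in B1 ++ B2 -> 2 < c < n.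
  move=> cB; have : c != 1 by apply: contraNneq one_notin => <-.
  have : c \in B1 ++ 1 :: B2 by move: cB; rewrite !mem_cat inE => /orP [->|->]; rewrite ?orbT.
  by move=> cB'; have := ne_m c cB'; have := range_B c cB'; lia.
have [W [V ->]] : exists W V, stack_run mono3 (B1 ++ 1 :: B2) [:: n; 2; d0] out' =
                              W ++ [:: n, 2 & V ++ [:: 1; d0]].
  apply: stack_run_one_pops_n_2; first by rewrite md0.
    by move=> c cB1; apply: range_B'; rewrite mem_cat cB1.
  by move=> c cB2; have := range_B' c; rewrite mem_cat cB2 orbT => /(_ isT); lia.
exact: contains_231_of_two_one_suffix.
Qed.

Lemma sT_mono3_contains_231 n m A1 A2 B :
  5 <= n -> m <= 2 -> {in A1 ++ A2, forall c, m <= c} ->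
  perm_eq (A1 ++ m :: A2 ++ n :: B) (iota 1 n) ->
  contains (sT mono3 (A1 ++ m :: A2 ++ n :: B)) [:: 2; 3; 1].
Proof.
move=> n5 m2 ge_m perm_x.
have perm_sep : perm_eq (n :: m :: A1 ++ A2 ++ B) (A1 ++ m :: A2 ++ n :: B).
  by apply/permP => p; rewrite !count_cat /= !count_cat /=; lia.
have [] := perm_iota_max (perm_trans perm_sep perm_x).
rewrite cons_uniq => /andP [m_notin uniq_rest] range.
have /andP [m_pos _] := range m (mem_head _ _).
have gt_m : {in A1 ++ A2, forall c, m < c}.
  move=> c cA; rewrite ltn_neqAle ge_m // andbT.
  by apply: contraNneq m_notin => ->; rewrite catA mem_cat cA.
have perm_y := perm_trans (stack_run_perm mono3 (A1 ++ m :: A2 ++ n :: B) [::] [::]) perm_x.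
have [D [out [yE free_mD perm_A1]]] := sT_mono3_cat_cons A1 m (A2 ++ n :: B).
move: perm_y; rewrite -[stack_run _ _ _ _]/(sT _ _) yE.
have range_DA2 : {in D ++ A2, forall c, m < c < n}.
  move=> c cDA2; have cA : c \in A1 ++ A2.
    move: cDA2; rewrite !mem_cat -(perm_mem perm_A1) mem_cat.
    by case/orP => [->|->]; rewrite ?orbT.
  have /andP [_ ->] : 0 < c < n by apply: range; rewrite inE catA mem_cat cA orbT.
  by rewrite gt_m.
have uniq_D : uniq D.
  have : uniq A1 by move: uniq_rest; rewrite cat_uniq => /andP [].
  by rewrite -(perm_uniq perm_A1) cat_uniq => /and3P [].
have gt_m_D d : d \in D -> m < d.
  by move=> dD; have /andP [] : m < d < n by apply: range_DA2; rewrite mem_cat dD.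
have [sD|[d1 [d2 [DE d21]]]] := below_min_shape free_mD gt_m_D uniq_D.
  apply: stack_run_contains_231_of_min_layer => //.
  - case: (m =P 1) => [|m_ne1]; [by left | right; split; first by lia].
    have : 1 \in A1 ++ m :: A2 ++ n :: B by rewrite (perm_mem perm_x) mem_iota; lia.
    by rewrite -(perm_mem perm_sep) !inE catA mem_cat => /or4P [/eqP|/eqP|/gt_m|//]; lia.
  - by move=> c cB; apply: range; rewrite !(inE, mem_cat) cB !orbT.
  - rewrite cons_uniq; apply/andP; split.
      by apply: contra m_notin; rewrite !mem_cat => ->; rewrite !orbT.
    by move: uniq_rest; rewrite catA => /(subseq_uniq (suffix_subseq _ _)).
move=> _; rewrite DE.
have /andP [_ d1n] : m < d1 < n by apply: range_DA2; rewrite DE mem_head.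
apply: (@stack_run_contains_231_of_bottom d2 d1 n [:: m; d1]); first by rewrite d21.
  by rewrite !mem_cat !inE eqxx !orbT.
move=> c; rewrite !inE => /or4P [/eqP->|/eqP->|/eqP->|cA2]; try lia.
by have /andP [] : m < c < n by apply: range_DA2; rewrite mem_cat cA2 orbT.
Qed.

Lemma sT_mono3_contains_231_of_small_before_max n A B : 5 <= n ->
  perm_eq (A ++ n :: B) (iota 1 n) -> (1 \in A) || (2 \in A) ->
  contains (sT mono3 (A ++ n :: B)) [:: 2; 3; 1].
Proof.
move=> n5 perm_x small; have [_ _ range_x] := perm_iota_props perm_x.
pose m := if 1 \in A then 1 else 2.
have ge_m c : c \in A -> m <= c.
  move=> cA; have := range_x c; rewrite mem_cat cA => /(_ isT).
  rewrite /m; case: ifP => [_|oneA]; first lia.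
  have : c != 1 by apply: contraFneq oneA => <-.
  lia.
have mA : m \in A by rewrite /m; case: ifP small => // ->.
move: perm_x ge_m; case/splitPr: mA => A1 A2 perm_x ge_m.
rewrite -catA; apply: sT_mono3_contains_231 => //; first by rewrite /m; case: ifP.
  by move=> c cA; apply: ge_m; move: cA; rewrite !mem_cat inE => /orP [->|->]; rewrite ?orbT.
by rewrite -catA in perm_x.
Qed.

Lemma index_lt_after (A B : seq nat) n c : n \notin A -> c \notin A -> c != n ->
  index n (A ++ n :: B) < index c (A ++ n :: B).
Proof.
move=> nA cA cn; rewrite !index_cat (negPf nA) (negPf cA) /= eqxx eq_sym (negPf cn).
by rewrite addn0 addnS ltnS leq_addr.
Qed.

Theorem lemma4p4 (n : nat) (x : seq nat) :
  5 <= n -> in_Sort n [:: 1; 2; 3] [:: 3; 2; 1] x ->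
  ind x n < minn (ind x 1) (ind x 2).
Proof.
move=> n5 [perm_x sorted_y].
have [uniq_x _ _] := perm_iota_props perm_x.
have n_x : n \in x by rewrite (perm_mem perm_x) mem_iota; lia.
move: sorted_y perm_x uniq_x; case/splitPr: n_x => A B sorted_y perm_x uniq_x.
case: (boolP ((1 \in A) || (2 \in A))) => [small|].
  have : ~~ contains (s_pair [:: 1; 2; 3] [:: 3; 2; 1] (A ++ n :: B)) [:: 2; 3; 1].
    by apply: west_s_sorted_avoids_231; rewrite sorted_y iota_ltn_sorted.
  by case/negP; apply: sT_mono3_contains_231_of_small_before_max.
have nA : n \notin A by move: uniq_x; rewrite cat_uniq => /and3P [_ /hasPn/(_ n (mem_head _ _))].
by rewrite negb_or => /andP [oneA twoA]; rewrite leq_min !index_lt_after //; lia.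
Qed.
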